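(* Let $(x_k)$ be a sequence in a Banach space $X$ which weakly converges to some $x\in X$. Then $\operatorname{cca}(x_k)\le 2\operatorname{wu}(x_k)$.
   Context: $\operatorname{ca}(y_k)=\inf_{n}\sup\{\|y_k-y_l\|: k,l\ge n\}$ and $\operatorname{cca}(x_k)=\operatorname{ca}(\frac1k\sum_{i=1}^k x_i)$. For $(x_k)$ weakly converging to $x$, $\operatorname{wu}(x_k)$ is the infimum of all $\varepsilon>0$ such that there exists $n\in\mathbb N$ with $\#\{k\in\mathbb N:|x^*(x_k-x)|>\varepsilon\}\le n$ for all $x^*\in B_{X^*}$. *)

From HB Require Import structures.
From mathcomp Require Import all_boot all_order all_algebra.
From mathcomp Require Import all_classical all_reals all_analysis.
Set Implicit Arguments. Unset Strict Implicit. Unset Printing Implicit Defensive.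
Import Order.TTheory GRing.Theory Num.Theory.
Import numFieldNormedType.Exports.
Local Open Scope classical_set_scope.
Local Open Scope ring_scope.
Local Open Scope card_scope.

Definition dual_elt (R : realType) (X : normedModType R) (f : {linear X -> R^o}) :=
  continuous (f : X -> R).

Definition dual_ball (R : realType) (X : normedModType R) (f : {linear X -> R^o}) :=
  dual_elt f /\ forall y : X, `|f y| <= `|y|.

Definition weak_cvg (R : realType) (X : normedModType R) (x_ : nat -> X) (x : X) :=
  forall f : {linear X -> R^o}, dual_elt f ->
    (fun k => f (x_ k)) @ \oo --> (f x : R^o).

Definition ca (R : realType) (X : normedModType R) (y_ : nat -> X) : \bar R :=
  ereal_inf [set ereal_sup [set r | exists k l : nat,
                 [/\ (n <= k)%N, (n <= l)%N & r = (`|y_ k - y_ l|)%:E]]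
            | n in [set: nat]].

(* Cesaro means: the k-th term (k >= 1) is (1/k) sum_{i=1}^k x_i;
   with 0-based indexing the (k)-th term is (1/(k+1)) sum_{i<k+1} x_i. *)
Definition cesaro (R : realType) (X : normedModType R) (x_ : nat -> X) : nat -> X :=
  fun k => (k.+1%:R)^-1 *: \sum_(i < k.+1) x_ i.

Definition cca (R : realType) (X : normedModType R) (x_ : nat -> X) : \bar R :=
  ca (cesaro x_).

Definition wu (R : realType) (X : normedModType R) (x_ : nat -> X) (x : X) : \bar R :=
  ereal_inf [set eps%:E | eps in [set eps : R | 0 < eps /\
     exists n : nat, forall f : {linear X -> R^o}, dual_ball f ->
       [set k | eps < `|f (x_ k - x)|] #<= `I_n]].

From Pilot Require Import Defs.
From HB Require Import structures.
From mathcomp Require Import all_boot all_order all_algebra.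
From mathcomp Require Import all_classical all_reals all_analysis.
From mathcomp Require Import ring lra.
Import numFieldNormedType.Exports.
Set Implicit Arguments. Unset Strict Implicit. Unset Printing Implicit Defensive.
Import Order.TTheory GRing.Theory Num.Theory.
Local Open Scope ring_scope.
Local Open Scope classical_set_scope.
Local Open Scope card_scope.

(* Write y_k for the Cesaro means and z_k := x_k - x.  If eps > 0 and n are
   such that every functional f of the dual ball satisfies |f z_k| > eps for
   at most n indices k, and |f z_k| <= M for all f and k, then testing
   y_k - x against a norming functional (Hahn-Banach, proved below by Zorn's
   lemma on graphs of norm-dominated functionals) gives
   ||y_k - x|| <= eps + n M / (k + 1), hence ca(y) <= 2 eps.  The uniform
   bound M replaces the uniform boundedness principle by a gliding hump: were
   it to fail, adding to a functional of norm < 1 small multiples of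
   functionals that are huge at ever later indices would yield a functional
   of the dual ball exceeding eps at n + 1 indices. *)

Section DualBall.
Variables (R : realType) (X : normedModType R).

Lemma dual_elt_of_bound (f : {linear X -> R^o}) (C : R) :
  (forall v, `|f v| <= C * `|v|) -> dual_elt f.
Proof.
move=> fC; apply: linear_continuous; apply/(proj1 (bounded_landau f)) => r.
exists (`|C| * `|r|) => v vr; apply: (le_trans (fC v)).
apply: (le_trans (ler_norm _)); rewrite normrM normr_id ler_wpM2l //.
exact: le_trans vr (ler_norm _).
Qed.

Lemma dual_ball_of_bound (f : {linear X -> R^o}) (C : R) : C <= 1 ->
  (forall v, `|f v| <= C * `|v|) -> dual_ball f.
Proof.
move=> C1 fC; split; first exact: dual_elt_of_bound fC.
by move=> v; apply: (le_trans (fC v)); rewrite -[leRHS]mul1r ler_wpM2r.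
Qed.

Lemma dual_ball0 : dual_ball (\0 : {linear X -> R^o}).
Proof. by apply: (@dual_ball_of_bound _ 0) => // v; rewrite /= normr0 mul0r. Qed.

Lemma normrZV_addr (t : R) (u z : X) :
  t != 0 -> `|u + t *: z| = `|t| * `|t^-1 *: u + z|.
Proof. by move=> t0; rewrite -normrZ scalerDr scalerA mulfV // scale1r. Qed.

(* A subspace of X together with a linear functional on it bounded by the
   norm, represented by the graph of that functional. *)
Definition dominated_graph (G : set (X * R)) :=
  [/\ G (0, 0),
      forall u a v b, G (u, a) -> G (v, b) -> G (u + v, a + b),
      forall t u a, G (u, a) -> G (t *: u, t * a) &
      forall u a, G (u, a) -> a <= `|u|].

Lemma dominated_graph_uniq G u a b :
  dominated_graph G -> G (u, a) -> G (u, b) -> a = b.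
Proof.
case=> _ Gadd Gsc Gdom Ga Gb.
have sub_le0 c d : G (u, c) -> G (u, d) -> c - d <= 0.
  move=> Gc Gd; have := Gdom _ _ (Gadd _ _ _ _ Gc (Gsc (-1) _ _ Gd)).
  by rewrite scaleN1r subrr normr0 mulN1r.
by apply/eqP; rewrite eq_le -subr_le0 sub_le0 //= -subr_le0 sub_le0.
Qed.

Lemma dominated_extension_sup G z : dominated_graph G -> exists c,
  (forall w b, G (w, b) -> b - `|w - z| <= c) /\
  (forall u a, G (u, a) -> c <= `|u + z| - a).
Proof.
case=> G0 Gadd _ Gdom.
have key w b u a : G (w, b) -> G (u, a) -> b - `|w - z| <= `|u + z| - a.
  move=> Gwb Gua; rewrite lerBrDr addrAC lerBlDr.
  apply: (le_trans (Gdom _ _ (Gadd _ _ _ _ Gwb Gua))).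
  have -> : w + u = (w - z) + (u + z) by rewrite addrACA addNr addr0.
  by rewrite [leRHS]addrC ler_normD.
pose S := [set r | exists w b, G (w, b) /\ r = b - `|w - z|].
have S0 : S (0 - `|0 - z|) by exists 0, 0.
have hsS : has_sup S.
  split; first by exists (0 - `|0 - z|).
  by exists (`|0 + z| - 0) => _ [w [b [Gwb ->]]]; apply: key.
exists (sup S); split.
- by move=> w b Gwb; apply: sup_upper_bound => //; exists w, b.
- move=> u a Gua; apply: ge_sup; first by exists (0 - `|0 - z|).
  by move=> _ [w [b [Gwb ->]]]; apply: key.
Qed.

Lemma dominated_extension_constant G z : dominated_graph G ->
  exists c, forall u a t, G (u, a) -> a + t * c <= `|u + t *: z|.
Proof.
move=> gG; have [c [cup clo]] := dominated_extension_sup z gG.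
have [_ _ Gsc Gdom] := gG.
exists c => u a t Gua.
case: (ltgtP t 0) => [tlt0|tgt0|->]; last first.
- by rewrite mul0r scale0r !addr0; exact: Gdom.
- have := clo _ _ (Gsc t^-1 _ _ Gua).
  rewrite normrZV_addr ?gt_eqF // gtr0_norm //.
  by rewrite -(ler_pM2l tgt0) mulrBr mulrA mulfV ?gt_eqF // mul1r; lra.
- have := cup _ _ (Gsc (- t^-1) _ _ Gua).
  rewrite scaleNr -opprD normrN normrZV_addr ?lt_eqF // ltr0_norm //.
  have nt : 0 < - t by rewrite oppr_gt0.
  have e : - t * (- t^-1 * a) = a by rewrite mulrA mulrNN mulfV ?lt_eqF // mul1r.
  by rewrite -(ler_pM2l nt) mulrBr e; lra.
Qed.

Lemma dominated_graph_extend G z : dominated_graph G ->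
  exists H, [/\ dominated_graph H, G `<=` H & exists c, H (z, c)].
Proof.
move=> gG; have [c Hc] := dominated_extension_constant z gG.
have [G0 Gadd Gsc _] := gG.
exists [set q | exists u a t, G (u, a) /\ q = (u + t *: z, a + t * c)]; split.
- split.
  + by exists 0, 0, 0; rewrite scale0r mul0r !addr0.
  + move=> _ _ _ _ [u [a [t [Gua [-> ->]]]]] [u' [a' [t' [Gua' [-> ->]]]]].
    exists (u + u'), (a + a'), (t + t'); split; first exact: Gadd.
    by rewrite scalerDl mulrDl addrACA [a + _ + _]addrACA.
  + move=> s _ _ [u [a [t [Gua [-> ->]]]]].
    exists (s *: u), (s * a), (s * t); split; first exact: Gsc.
    by rewrite scalerDr scalerA mulrDr mulrA.
  + by move=> _ _ [u [a [t [Gua [-> ->]]]]]; exact: Hc.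
- by move=> [u a] Gua; exists u, a, 0; rewrite scale0r mul0r !addr0.
- by exists c, 0, 0, 1; rewrite scale1r mul1r !add0r.
Qed.

Lemma dominated_graph_directed (U : set (X * R)) : U (0, 0) ->
  (forall q1 q2, U q1 -> U q2 ->
     exists Y, [/\ dominated_graph Y, Y `<=` U, Y q1 & Y q2]) ->
  dominated_graph U.
Proof.
move=> U0 dir; split => //.
- move=> u a v b Ua Ub; have [Y [[_ Yadd _ _] YU Y1 Y2]] := dir _ _ Ua Ub.
  exact/YU/Yadd.
- move=> t u a Ua; have [Y [[_ _ Ysc _] YU Y1 _]] := dir _ _ Ua Ua.
  exact/YU/Ysc.
- by move=> u a Ua; have [Y [[_ _ _ Ydom] _ Y1 _]] := dir _ _ Ua Ua; exact: Ydom.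
Qed.

Lemma dominated_graph_maximal G0 : dominated_graph G0 ->
  exists G, [/\ dominated_graph G, G0 `<=` G & forall z, exists a, G (z, a)].
Proof.
move=> gG0; pose P A := dominated_graph (A `|` G0).
have chainP F : F `<=` P -> total_on F subset -> P (\bigcup_(A in F) A).
  move=> FP Ftot; apply: dominated_graph_directed; first by right; case: gG0.
  pose F0 := F `|` [set set0].
  have F0P A : F0 A -> P A by case=> [/FP //|->]; rewrite /P set0U.
  have F0U A : F0 A -> A `|` G0 `<=` \bigcup_(A in F) A `|` G0.
    case=> [FA|->]; first exact: setSU (bigcup_sup FA).
    by rewrite set0U; apply: subsetUr.
  have cover q : (\bigcup_(A in F) A `|` G0) q -> exists2 A, F0 A & (A `|` G0) q.
    by case=> [[A FA Aq]|G0q]; [exists A; left | exists set0; [right|right]].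
  move=> q1 q2 /cover [A1 FA1 q1A] /cover [A2 FA2 q2A].
  have [A12|A21] : A1 `<=` A2 \/ A2 `<=` A1.
    case: FA1 FA2 => [FA1|->] [FA2|->]; by [apply: Ftot | left | right | left].
  - exists (A2 `|` G0); split; [exact: F0P | exact: F0U | | by []].
    exact: setSU A12 _ q1A.
  - exists (A1 `|` G0); split; [exact: F0P | exact: F0U | by [] | ].
    exact: setSU A21 _ q2A.
have [A [PA maxA]] := Zorn_bigcup chainP.
exists (A `|` G0); split => //.
move=> z; apply: contrapT => noz.
have [H [gH AH [c Hzc]]] := dominated_graph_extend z PA.
apply: (maxA H).
- split; first by move=> q Aq; apply: AH; left.
  by move=> HA; apply: noz; exists c; left; exact: HA.
- by rewrite /P (setUidl (subset_trans (@subsetUr _ A G0) AH)).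
Qed.

Lemma dominated_graph_functional G : dominated_graph G ->
  (forall z, exists a, G (z, a)) ->
  exists f : {linear X -> R^o}, dual_ball f /\ forall z, G (z, f z).
Proof.
move=> gG total; pose f (z : X) : R^o := projT1 (cid (total z)).
have fG z : G (z, f z) by rewrite /f; case: cid.
have [_ Gadd Gsc Gdom] := gG.
have lf : linear f.
  move=> t u v; apply: dominated_graph_uniq gG (fG _) _.
  by apply: Gadd; [apply: Gsc|]; apply: fG.
pose F : {linear X -> R^o} := HB.pack f (GRing.isLinear.Build _ _ _ _ _ lf).
exists F; split => //.
apply: (@dual_ball_of_bound _ 1) => // v; rewrite mul1r ler_norml Gdom // andbT.
have := Gdom _ _ (Gsc (-1) _ _ (fG v)).
by rewrite scaleN1r normrN mulN1r lerNl.
Qed.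

Lemma norming_functional (y : X) :
  exists f : {linear X -> R^o}, dual_ball f /\ f y = `|y|.
Proof.
pose L := [set q | exists t : R, q = (t *: y, t * `|y|)].
have gL : dominated_graph L.
  split.
  - by exists 0; rewrite scale0r mul0r.
  - by move=> _ _ _ _ [t [-> ->]] [t' [-> ->]]; exists (t + t'); rewrite scalerDl mulrDl.
  - by move=> s _ _ [t [-> ->]]; exists (s * t); rewrite scalerA mulrA.
  - by move=> _ _ [t [-> ->]]; rewrite normrZ ler_wpM2r // ler_norm.
have [G [gG LG total]] := dominated_graph_maximal gL.
have [f [bf fG]] := dominated_graph_functional gG total.
exists f; split => //; apply: dominated_graph_uniq gG (fG y) _.
by apply: LG; exists 1; rewrite scale1r mul1r.
Qed.

End DualBall.

Lemma uniq_size_le_card (A : set nat) n (s : seq nat) :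
  A #<= `I_n -> uniq s -> (forall i, i \in s -> A i) -> (size s <= n)%N.
Proof.
move=> /pcard_leP/injfunPex [f fA finj] us sA.
rewrite -(size_map f) -(size_iota 0 n); apply: uniq_leq_size.
  rewrite map_inj_in_uniq // => i j /sA Ai /sA Aj.
  exact: finj (mem_set Ai) (mem_set Aj).
by move=> _ /mapP [i /sA Ai ->]; rewrite mem_iota /= add0n; exact: fA.
Qed.

Lemma card_ord_le_card (A : set nat) n k (P : {pred 'I_k}) :
  A #<= `I_n -> (forall i, P i -> A i) -> (#|P| <= n)%N.
Proof.
move=> An PA; rewrite cardE -(size_map val).
apply: (uniq_size_le_card An); first by rewrite map_inj_uniq ?enum_uniq.
by move=> i /mapP [j]; rewrite mem_enum => Pj ->; exact: PA.
Qed.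

Lemma exists_small_coef (R : realFieldType) (T : eqType) (s : seq T)
    (a b : T -> R) (e : R) :
  0 < e -> (forall j, 0 <= a j) -> (forall j, j \in s -> 0 < b j) ->
  exists c, [/\ 0 < c, c <= e & forall j, j \in s -> c * a j < b j].
Proof.
move=> e0 a0; elim: s => [|i s IH] bpos; first by exists e.
have [c [c0 ce cs]] : exists c, [/\ 0 < c, c <= e & forall j, j \in s -> c * a j < b j].
  by apply: IH => j js; apply: bpos; rewrite in_cons js orbT.
have bi : 0 < b i := bpos i (mem_head i s).
have ai1 : 0 < a i + 1 by rewrite ltr_wpDl.
pose m := Num.min c (b i / (a i + 1)).
have mc : m <= c by rewrite ge_min lexx.
have mb : m <= b i / (a i + 1) by rewrite ge_min lexx orbT.
exists m; split.
- by rewrite lt_min c0 divr_gt0.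
- exact: le_trans mc ce.
- move=> j; rewrite in_cons => /orP [/eqP ->|js].
  + apply: le_lt_trans (ler_wpM2r (a0 i) mb) _.
    by rewrite mulrAC ltr_pdivrMr // mulrDr mulr1 ltrDl.
  + exact: le_lt_trans (ler_wpM2r (a0 j) mc) (cs j js).
Qed.

Section UniformBound.
Variables (R : realType) (X : normedModType R) (z : nat -> X) (eps : R) (n : nat).
Hypothesis z_weakly_bounded :
  forall h : {linear X -> R^o}, dual_elt h -> exists B, forall k, `|h (z k)| <= B.
Hypothesis few_large : forall f : {linear X -> R^o}, dual_ball f ->
  [set k | eps < `|f (z k)|] #<= `I_n.

Section Unbounded.
Hypothesis unbounded : ~ exists M, forall f : {linear X -> R^o}, dual_ball f ->
  forall k, `|f (z k)| <= M.

Lemma unbounded_late (T : R) (K : nat) : exists (f : {linear X -> R^o}) i,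
  [/\ dual_ball f, (K < i)%N & T < `|f (z i)|].
Proof.
pose M := `|T| + \sum_(j < K.+1) `|z j|.
have [f [i [bf Mi]]] : exists (f : {linear X -> R^o}) i,
    dual_ball f /\ M < `|f (z i)|.
  apply: contrapT => small; apply: unbounded; exists M => f bf i.
  by rewrite leNgt; apply/negP => Mi; apply: small; exists f, i.
exists f, i; split => //; last first.
  by apply: le_lt_trans Mi; rewrite (le_trans (ler_norm T)) // lerDl sumr_ge0.
rewrite ltnNge; apply/negP => iK; move: Mi; apply/negP; rewrite -leNgt.
apply: (le_trans (proj2 bf _)).
rewrite /M (bigD1 (Ordinal (iK : (i < K.+1)%N))) //= addrCA lerDl.
by rewrite addr_ge0 // sumr_ge0.
Qed.

(* Gliding hump: perturbing h by a small multiple of a functional that is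
   large far out in the sequence creates one more large value. *)
Lemma hump_step (h : {linear X -> R^o}) (rho : R) (s : seq nat) :
  rho < 1 -> (forall v, `|h v| <= rho * `|v|) ->
  (forall j, j \in s -> eps < `|h (z j)|) ->
  exists (h' : {linear X -> R^o}) (rho' : R) (i : nat),
    [/\ rho' < 1, forall v, `|h' v| <= rho' * `|v|, i \notin s &
        forall j, j \in i :: s -> eps < `|h' (z j)|].
Proof.
move=> rho1 hb hs.
have [c [c0 c_small cs]] : exists c, [/\ 0 < c, c <= (1 - rho) / 2 &
    forall j, j \in s -> c * `|z j| < `|h (z j)| - eps].
  by apply: exists_small_coef => [|//|j /hs]; [lra | rewrite subr_gt0].
have [B hzB] := z_weakly_bounded (dual_elt_of_bound hb).
have [f [i [bf Ki fzi]]] := unbounded_late ((eps + B) / c) (\max_(j <- s) j).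
have cfzi : eps + B < c * `|f (z i)|.
  by rewrite -ltr_pdivrMl // mulrC.
exists (h \+ c \*: f), (rho + c), i; split.
- lra.
- move=> v /=; apply: (le_trans (ler_normD _ _)); rewrite mulrDl lerD //.
  by rewrite normrZ gtr0_norm // ler_pM2l // (proj2 bf).
- apply/negP => si; move: Ki; rewrite ltnNge.
  by rewrite (@leq_bigmax_seq _ s xpredT (fun j => j) i si).
- move=> j; rewrite in_cons => /orP [/eqP ->|js] /=.
  + have := ler_normB (h (z i) + c *: f (z i)) (h (z i)).
    rewrite [h (z i) + _]addrC addrK normrZ gtr0_norm //.
    have := hzB i; lra.
  + have := ler_normB (h (z j) + c *: f (z j)) (c *: f (z j)).
    rewrite addrK normrZ gtr0_norm //.
    have : c * `|f (z j)| <= c * `|z j| by rewrite ler_pM2l // (proj2 bf).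
    have := cs j js; lra.
Qed.

Lemma humps m : exists (h : {linear X -> R^o}) (rho : R) (s : seq nat),
  [/\ rho < 1, forall v, `|h v| <= rho * `|v|, uniq s, size s = m &
      forall j, j \in s -> eps < `|h (z j)|].
Proof.
elim: m => [|m [h [rho [s [rho1 hb us ss hs]]]]].
  by exists \0, 0, [::]; split => // v; rewrite /= normr0 mul0r.
have [h' [rho' [i [rho'1 hb' si hs']]]] := hump_step rho1 hb hs.
by exists h', rho', (i :: s); split => //=; rewrite ?si ?us ?ss.
Qed.

End Unbounded.

Lemma dual_ball_uniformly_bounded : exists M, forall f : {linear X -> R^o},
  dual_ball f -> forall k, `|f (z k)| <= M.
Proof.
apply: contrapT => unbounded.
have [h [rho [s [rho1 hb us ss hs]]]] := humps unbounded n.+1.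
have := uniq_size_le_card (few_large (dual_ball_of_bound (ltW rho1) hb)) us hs.
by rewrite ss ltnn.
Qed.

End UniformBound.

Lemma div_succ_le_eventually (R : archiFieldType) (A e : R) : 0 < e ->
  exists N, forall k, (N <= k)%N -> A / k.+1%:R <= e.
Proof.
move=> e0; exists (Num.trunc (A / e)) => k Nk.
have := truncnS_gt (A / e); rewrite ltr_pdivrMr // => AeN.
rewrite ler_pdivrMr // mulrC; apply: (le_trans (ltW AeN)).
by rewrite ler_pM2r // ler_nat.
Qed.

Section Cesaro.
Variables (R : realType) (X : normedModType R).

Lemma cesaro_subr (x_ : nat -> X) (x : X) k :
  Defs.cesaro x_ k - x = (k.+1%:R)^-1 *: \sum_(i < k.+1) (x_ i - x).
Proof.
rewrite /Defs.cesaro sumrB sumr_const card_ord scalerBr -[x *+ _]scaler_nat scalerA.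
by rewrite mulVf ?scale1r // pnatr_eq0.
Qed.

Lemma ca_le_double (y_ : nat -> X) (x : X) (r : R) (N : nat) :
  (forall k, (N <= k)%N -> `|y_ k - x| <= r) -> (ca y_ <= (2 * r)%:E)%E.
Proof.
move=> yr; apply: le_trans (ereal_inf_lbound (ex_intro2 _ _ N I erefl)) _.
apply: ge_ereal_sup => _ [k [l [Nk Nl ->]]]; rewrite lee_fin.
have -> : y_ k - y_ l = (y_ k - x) - (y_ l - x) by rewrite opprB addrA subrK.
by apply: (le_trans (ler_normB _ _)); have := yr k Nk; have := yr l Nl; lra.
Qed.

Lemma weak_cvg_bounded (x_ : nat -> X) (x : X) (h : {linear X -> R^o}) :
  weak_cvg x_ x -> dual_elt h -> exists B, forall k, `|h (x_ k - x)| <= B.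
Proof.
move=> wc hc.
have : cvgn (fun k => h (x_ k - x)).
  apply/cvg_ex; exists (h x - h x); under eq_fun do rewrite linearB.
  exact: cvgB (wc h hc) (cvg_cst _).
move=> /cvg_seq_bounded/ex_bound [|B hB]; first exact: (globally_properfilter (a := 0)).
by exists B => k; exact: hB.
Qed.

Variables (x_ : nat -> X) (x : X) (eps : R) (n : nat).
Hypothesis eps_gt0 : 0 < eps.
Hypothesis few_large : forall f : {linear X -> R^o}, dual_ball f ->
  [set k | eps < `|f (x_ k - x)|] #<= `I_n.

Section Bounded.
Variable M : R.
Hypothesis M_bound : forall f : {linear X -> R^o}, dual_ball f ->
  forall i, `|f (x_ i - x)| <= M.

Lemma sum_dual_ball_le (f : {linear X -> R^o}) k : dual_ball f ->
  \sum_(i < k) `|f (x_ i - x)| <= k%:R * eps + n%:R * M.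
Proof.
move=> bf; rewrite (bigID (fun i : 'I_k => eps < `|f (x_ i - x)|)) /= addrC.
apply: lerD.
  apply: (@le_trans _ _ (\sum_(i < k) eps)); last by rewrite sumr_const card_ord mulr_natl.
  rewrite big_mkcond /=; apply: ler_sum => i _.
  by case: ifP => [|_]; [rewrite leNgt | exact: ltW].
apply: (@le_trans _ _ (\sum_(i < k | eps < `|f (x_ i - x)|) M)).
  by apply: ler_sum => i _; exact: M_bound.
have M0 : 0 <= M by apply: le_trans (M_bound (@dual_ball0 _ X) 0).
rewrite sumr_const -[M *+ _]mulr_natr [leRHS]mulrC ler_wpM2l // ler_nat.
exact: card_ord_le_card (few_large bf) _.
Qed.

Lemma norm_cesaro_subr_le k :
  `|Defs.cesaro x_ k - x| <= eps + n%:R * M / k.+1%:R.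
Proof.
have [g [bg <-]] := norming_functional (Defs.cesaro x_ k - x).
have k1 : k.+1%:R != 0 :> R by rewrite pnatr_eq0.
have -> : eps + n%:R * M / k.+1%:R = k.+1%:R^-1 * (k.+1%:R * eps + n%:R * M).
  by field.
rewrite cesaro_subr linearZ raddf_sum /= ler_wpM2l ?invr_ge0 //.
apply: le_trans (sum_dual_ball_le k.+1 bg).
by apply: ler_sum => i _; exact: ler_norm.
Qed.

End Bounded.

Lemma cca_le_double : weak_cvg x_ x -> (cca x_ <= (2 * eps)%:E)%E.
Proof.
move=> wc; have [M M_bound] := dual_ball_uniformly_bounded
  (fun h hc => weak_cvg_bounded wc hc) few_large.
apply/lee_addgt0Pr => d d0.
have d2 : 0 < d / 2 by lra.
have [N Nd] := div_succ_le_eventually (n%:R * M) d2.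
apply: (@le_trans _ _ (2 * (eps + d / 2))%:E); last by rewrite -EFinD lee_fin; lra.
apply: (ca_le_double (N := N)) => k Nk.
by apply: le_trans (norm_cesaro_subr_le M_bound k) _; rewrite lerD2l Nd.
Qed.

End Cesaro.

Unset Implicit Arguments.
Local Open Scope ereal_scope.

Theorem lemma4p4 (R : realType) (X : completeNormedModType R)
  (x_ : nat -> X) (x : X) :
  weak_cvg x_ x -> cca x_ <= 2%:E * wu x_ x.
Proof.
move=> wc; rewrite -lee_pdivrMl //.
apply: le_ereal_inf_tmp => _ [eps [eps0 [n few_large]] <-].
by rewrite lee_pdivrMl // -EFinM; exact: cca_le_double eps0 few_large wc.
Qed.
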